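(* For all integers $0\le k\le n$ and all $x$, \[ \sum_{j=0}^{n-k}\binom{n-k}{j}B_{j+k}(x)=\sum_{j=0}^{k}\binom{k}{j}(-1)^{j}B_{n-j}(x)+\big(nx-(n-k)\big)x^{n-k-1}(x-1)^{k-1}, \] where the last term is understood as the polynomial $\frac{d}{dx}\left[x^{n-k}(x-1)^k\right]$ (to which it is equal after cancellation, also in the cases $k=0$ or $k=n$).
   Context: The Bernoulli polynomials are defined by $\sum_{n\ge0}B_n(x)\frac{t^n}{n!}=\frac{te^{xt}}{e^t-1}$. *)

From HB Require Import structures.
From mathcomp Require Import all_boot all_order all_algebra.
Set Implicit Arguments. Unset Strict Implicit. Unset Printing Implicit Defensive.
Import Order.TTheory GRing.Theory Num.Theory.
Local Open Scope ring_scope.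

(* Bernoulli polynomials B_n(x), defined by  sum_n B_n(x) t^n/n! = t e^{xt}/(e^t-1).
   Comparing coefficients of t^{n+1} in  (e^t - 1) * sum_n B_n(x) t^n/n! = t e^{xt}
   gives exactly the recurrence
       sum_{k=0}^{n} C(n+1,k) B_k(x) = (n+1) x^n      (for every n),
   which determines the B_n uniquely (in characteristic 0):
       B_n = X^n - (n+1)^{-1} * sum_{k<n} C(n+1,k) B_k.
   [bern_seq n] is the list [:: B_0; ...; B_n]. *)
Fixpoint bern_seq (R : numFieldType) (n : nat) : seq {poly R} :=
  match n with
  | 0 => [:: 1]
  | n'.+1 =>
      let s := bern_seq R n' in
      rcons s ('X^n - (n.+1%:R)^-1 *:
                 \sum_(k < n) ('C(n.+1, k))%:R *: nth 0 s k)
  end.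

Definition bernoulli_poly (R : numFieldType) (n : nat) : {poly R} :=
  nth 0 (bern_seq R n) n.

From HB Require Import structures.
From mathcomp Require Import all_boot all_order all_algebra ring zify.
Import Order.TTheory GRing.Theory Num.Theory.
Local Open Scope ring_scope.

(* Proof by the umbral (Appell) calculus.  Let [umbra] be the linear map on
   polynomials sending each monomial X^i to the Bernoulli polynomial B_i.
   The defining recurrence  sum_{i<m} C(m,i) B_i = (X^m)'  says exactly that
       umbra ((X + 1)^m) = B_m + (X^m)'.
   Now apply [umbra] to  P = (X + 1)^(n-k) * X^k, expanded in two ways:
   - binomially in (X + 1)^(n-k): P = sum_j C(n-k,j) X^(j+k), so
     umbra P = sum_j C(n-k,j) B_(j+k), the left-hand side;
   - writing X = (X + 1) - 1: P = sum_j C(k,j) (-1)^j (X + 1)^(n-j), so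
     umbra P = sum_j C(k,j) (-1)^j (B_(n-j) + (X^(n-j))'), and the derivative
     terms sum back to (X^(n-k) (X - 1)^k)' by the same expansion with X. *)

Section BernoulliRecurrence.
Variable R : numFieldType.
Local Notation B := (bernoulli_poly R).

Lemma size_bern_seq n : size (bern_seq R n) = n.+1.
Proof. by elim: n => [|n IH] //=; rewrite size_rcons IH. Qed.

Lemma nth_bern_seq m i : (i <= m)%N -> nth 0 (bern_seq R m) i = B i.
Proof.
elim: m i => [|m IH] i; first by rewrite leqn0 => /eqP ->.
rewrite leq_eqVlt => /orP [/eqP -> // | ltim].
by rewrite /= nth_rcons size_bern_seq ltim IH.
Qed.

Lemma bernoulli_polyS n :
  B n.+1 = 'X^(n.+1) - (n.+2%:R)^-1 *: \sum_(k < n.+1) 'C(n.+2, k)%:R *: B k.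
Proof.
rewrite {1}/bernoulli_poly /= nth_rcons size_bern_seq ltnn eqxx.
by congr (_ - _ *: _); apply: eq_bigr => -[k ltkn] _; rewrite nth_bern_seq.
Qed.

Lemma bernoulli_binomial_sum m : \sum_(k < m) 'C(m, k)%:R *: B k = ('X^m)^`().
Proof.
rewrite derivXn; case: m => [|[|n]]; first by rewrite big_ord0 mulr0n.
  by rewrite big_ord1 /bernoulli_poly /= scale1r.
rewrite big_ord_recr /= bernoulli_polyS binSn scalerBr scalerA mulfV ?pnatr_eq0 //.
by rewrite scale1r addrC subrK scaler_nat.
Qed.

End BernoulliRecurrence.

Section Umbra.
Variable R : numFieldType.
Local Notation B := (bernoulli_poly R).

Definition umbra (p : {poly R}) : {poly R} := \sum_(i < size p) p`_i *: B i.

Lemma umbra_widen m (p : {poly R}) :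
  (size p <= m)%N -> umbra p = \sum_(i < m) p`_i *: B i.
Proof.
move=> le_pm; rewrite /umbra (big_ord_widen _ (fun i => p`_i *: B i) le_pm).
rewrite [RHS](bigID (fun i : 'I_m => (i < size p)%N)) /=.
rewrite [X in _ + X]big1 ?addr0 // => i.
by rewrite -leqNgt => /(nth_default 0) ->; rewrite scale0r.
Qed.

Lemma umbra_is_linear : linear umbra.
Proof.
move=> a p q; set m := maxn (size p) (size q).
have le_apq : (size (a *: p + q)%R <= m)%N.
  rewrite (leq_trans (size_polyD _ _)) // geq_max !leq_max leqnn orbT andbT.
  by rewrite (leq_trans (size_scale_leq _ _)) ?leq_maxl.
rewrite !(umbra_widen m) ?leq_maxl ?leq_maxr // scaler_sumr -big_split /=.
by apply: eq_bigr => i _; rewrite coefD coefZ scalerDl scalerA.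
Qed.

HB.instance Definition _ :=
  GRing.isLinear.Build R {poly R} {poly R} _ umbra umbra_is_linear.

Lemma umbra_Xn i : umbra 'X^i = B i.
Proof.
rewrite /umbra size_polyXn big_ord_recr /= coefXn eqxx scale1r big1 ?add0r //.
by move=> j _; rewrite coefXn ltn_eqF ?scale0r.
Qed.

Lemma umbra_shift m : umbra (('X + 1) ^+ m) = B m + ('X^m)^`().
Proof.
rewrite exprD1n raddf_sum big_ord_recr /= binn mulr1n umbra_Xn addrC.
congr (_ + _); rewrite -bernoulli_binomial_sum; apply: eq_bigr => i _.
by rewrite raddfMn /= umbra_Xn scaler_nat.
Qed.

End Umbra.
Arguments umbra {R} p.

Lemma expr_mul_subr1 (R : comNzRingType) (A : comAlgType R) (n k : nat) (y : A) :
  (k <= n)%N ->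
  y ^+ (n - k) * (y - 1) ^+ k =
  \sum_(j < k.+1) ('C(k, j)%:R * (-1) ^+ j) *: y ^+ (n - j).
Proof.
move=> le_kn; rewrite exprBn mulr_sumr; apply: eq_bigr => -[j /= le_jk] _.
have -> : (n - j = (n - k) + (k - j))%N by lia.
rewrite expr1n mulr1 exprD -mulr_algl -in_algE rmorphM rmorphXn rmorphN1 rmorph_nat.
ring.
Qed.

Lemma bernoulli_binomial_identity (R : numFieldType) (n k : nat) : (k <= n)%N ->
  \sum_(j < (n - k).+1) 'C(n - k, j)%:R *: bernoulli_poly R (j + k) =
  \sum_(j < k.+1) ('C(k, j)%:R * (-1) ^+ j) *: bernoulli_poly R (n - j)
  + ('X^(n - k) * ('X - 1) ^+ k)^`().
Proof.
move=> le_kn; pose P : {poly R} := ('X + 1) ^+ (n - k) * 'X^k.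
have umbraP_binomial : umbra P =
    \sum_(j < (n - k).+1) 'C(n - k, j)%:R *: bernoulli_poly R (j + k).
  rewrite /P exprD1n mulr_suml raddf_sum; apply: eq_bigr => j _.
  by rewrite mulrnAl -exprD raddfMn /= umbra_Xn scaler_nat.
have umbraP_alternating : umbra P =
    \sum_(j < k.+1) ('C(k, j)%:R * (-1) ^+ j) *:
      (bernoulli_poly R (n - j) + ('X^(n - j))^`()).
  rewrite /P -{2}['X](addrK 1) expr_mul_subr1 // linear_sum.
  by apply: eq_bigr => j _; rewrite linearZ /= umbra_shift.
rewrite -umbraP_binomial umbraP_alternating expr_mul_subr1 // linear_sum.
by rewrite -big_split; apply: eq_bigr => j _; rewrite linearZ scalerDr.
Qed.

Theorem mainTheorem4 (R : numFieldType) (n k : nat) (x : R) :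
  (k <= n)%N ->
  (\sum_(j < (n - k).+1) ('C(n - k, j))%:R * (bernoulli_poly R (j + k)).[x]) =
  (\sum_(j < k.+1) ('C(k, j))%:R * (-1) ^+ j * (bernoulli_poly R (n - j)).[x])
  + (('X^(n - k) * ('X - 1) ^+ k)^`()).[x].
Proof.
move=> le_kn.
have := congr1 (horner^~ x) (bernoulli_binomial_identity R n k le_kn).
rewrite hornerD !horner_sum /=.
under [X in X = _ -> _]eq_bigr do rewrite hornerZ.
by under [X in _ = X + _ -> _]eq_bigr do rewrite hornerZ.
Qed.
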